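(* Let $G=(V,E)$ be a finite simple graph with at least one edge and no isolated vertices. Then $\lambda_{\max}(G)\ge 2\rho(G)^{-1}$, and $\lambda_{\max}(G)\ge 2\rho(A)^{-1}\frac{|A|}{|A|+|\delta(A)|}$ for all nonempty $A\subseteq E$. Moreover, if $G$ is uniformly dense, then $\lambda_{\max}(G|A)\ge 2\rho(G)^{-1}$ for all nonempty $A\subseteq E$.
   Context: $c(A)$ is the number of components of $(V,A)$, $\operatorname{rank}(A)=|V|-c(A)$, $\rho(A)=|A|/\operatorname{rank}(A)$, $\rho(G)=\rho(E)$; $G$ is uniformly dense if $\rho(A)\le\rho(G)$ for all nonempty $A\subseteq E$. $G|A$ is the graph obtained from $(V,A)$ by deleting isolated vertices, with vertex set $V|_A$. The normalized Laplacian $L(G)$ acts on $f:V\to\mathbb{R}$ by $Lf(v)=f(v)-\frac{1}{\deg v}\sum_{u:\{u,v\}\in E}f(u)$; its eigenvalues are real and nonnegative, and $\lambda_{\max}(G)$ (resp. $\lambda_{\max}(G|A)$) denotes the largest eigenvalue of $L(G)$ (resp. $L(G|A)$). The boundary of $A$ is $\delta(A)=\{e\in E\setminus A: \text{at least one endpoint of } e \text{ lies in } V|_A\}$. *)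

From HB Require Import structures.
From mathcomp Require Import all_boot all_order all_algebra.
From mathcomp Require Import reals.
Set Implicit Arguments. Unset Strict Implicit. Unset Printing Implicit Defensive.
Import Order.TTheory GRing.Theory Num.Theory.
Local Open Scope ring_scope.

(* A finite simple graph G = (V, E): V is a finType (the vertex set is all of V),
   E : {set {set V}} with every edge a 2-element subset of V. *)
Section Graph.
Variable V : finType.

Definition eadj (A : {set {set V}}) : rel V := fun x y => [set x; y] \in A.

(* c(A): number of connected components of (V, A) (isolated vertices count) *)
Definition ncomp (A : {set {set V}}) : nat :=
  #|[set [set y | connect (eadj A) x y] | x : V]|.

Definition grank (A : {set {set V}}) : nat := (#|V| - ncomp A)%N.

Definition rho (R : realType) (A : {set {set V}}) : R := #|A|%:R / (grank A)%:R.

Definition uniformly_dense (R : realType) (E : {set {set V}}) : Prop :=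
  forall A : {set {set V}}, A \subset E -> A != set0 -> rho R A <= rho R E.

Definition vsupp (A : {set {set V}}) : {set V} := [set v | [exists e in A, v \in e]].

Definition bdry (E A : {set {set V}}) : {set {set V}} :=
  [set e in E :\: A | [exists v in e, v \in vsupp A]].

Definition gdeg (A : {set {set V}}) (v : V) : nat := #|[set e in A | v \in e]|.

(* lam is an eigenvalue of the normalized Laplacian of the graph with vertex
   set W and edge set A (functions f : W -> R, represented as f : V -> R whose
   values outside W are irrelevant):
   L f (v) = f v - (1/deg v) * sum_{u ~ v} f u = lam * f v for all v in W, f <> 0 on W. *)
Definition lap_eig (R : realType) (W : {set V}) (A : {set {set V}}) (lam : R) : Prop :=
  exists f : V -> R,
    (exists2 v, v \in W & f v != 0) /\
    forall v, v \in W ->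
      f v - (gdeg A v)%:R^-1 * (\sum_(u | eadj A u v) f u) = lam * f v.

Definition lap_max (R : realType) (W : {set V}) (A : {set {set V}}) (lam : R) : Prop :=
  lap_eig W A lam /\ forall mu, lap_eig W A mu -> mu <= lam.

End Graph.

(* The largest eigenvalue lam of the normalized Laplacian of a graph with edge
   set B bounds its Rayleigh quotient: sum_{uv in B} (f u - f v)^2 <=
   lam * sum_v deg v * f v ^ 2 for every f.  (A maximiser of the quotient on the
   compact unit sphere exists, and its first variation shows it is an
   eigenvector.)  A spanning forest of A is bipartite, so some 2-colouring s
   of the vertices makes at least rank(A) edges of A bichromatic.  Testing
   with f = +-1 on V|_A according to s and 0 elsewhere, each bichromatic edge
   contributes 4, while the weighted norm is at most the total degree of
   V|_A, i.e. 2 (|A| + |delta(A)|).  This is the second bound; A = E gives the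
   first, and the graph G|A (where delta(A) is empty) together with uniform
   density gives the third. *)

From HB Require Import structures.
From mathcomp Require Import all_boot all_order all_algebra.
From mathcomp Require Import reals.
From mathcomp Require Import ring lra zify.
Set Implicit Arguments. Unset Strict Implicit. Unset Printing Implicit Defensive.
Import Order.TTheory GRing.Theory Num.Theory.
Local Open Scope ring_scope.

(* Analysis is imported only inside this module, since classical_sets shadows
   the finset names used in the rest of the file. *)
Module Rayleigh.
From mathcomp Require Import boolp classical_sets topology normedtype derive.
Import numFieldNormedType.Exports.

Lemma continuous_mulr (R : realType) (T : topologicalType) (g h : T -> R) :
  continuous g -> continuous h -> continuous (fun x => g x * h x).
Proof. by move=> cg ch x; exact: continuousM (cg x) (ch x). Qed.

Lemma continuous_sqr (R : realType) (T : topologicalType) (g : T -> R) :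
  continuous g -> continuous (fun x => g x ^+ 2).
Proof. by move=> cg; exact: continuous_mulr. Qed.

Lemma continuous_sum (R : realType) (T : topologicalType) (I : finType)
    (P : pred I) (g : I -> T -> R) :
  (forall i, continuous (g i)) -> continuous (fun x => \sum_(i | P i) g i x).
Proof.
by move=> cg; apply: continuous_big => [|i _]; [exact: add_continuous | exact: cg].
Qed.

Lemma linear_coef_eq0 (R : realFieldType) (b c : R) :
  (forall t, t * b + t ^+ 2 * c <= 0) -> b = 0.
Proof.
move=> H; pose k := `|c| + 1; pose t := b / k.
have k_gt0 : 0 < k by rewrite ltr_pwDr ?normr_ge0.
have ck : 1 <= c + k by rewrite /k; have := ler_norm (- c); rewrite normrN; lra.
have bk : b = t * k by rewrite /t divfK ?gt_eqF.
have t2 : t ^+ 2 <= 0.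
  by have := H t; rewrite bk => Ht; have := sqr_ge0 t; nra.
have /eqP : t ^+ 2 = 0 by apply/eqP; rewrite eq_le t2 sqr_ge0.
by rewrite sqrf_eq0 bk => /eqP ->; rewrite mul0r.
Qed.

Section Rayleigh.
Variables (R : realType) (I : finType) (a : I -> I -> R) (d : I -> R) (W : {set I}).
Hypotheses (a_sym : forall u w, a u w = a w u) (a_ge0 : forall u w, 0 <= a u w)
  (a_supp : forall u w, a u w != 0 -> u \in W)
  (d_gt0 : forall v, v \in W -> 0 < d v).

(* Sums over ordered pairs: every edge is counted twice. *)
Definition dirichlet (f : I -> R) := \sum_u \sum_w a u w * (f u - f w) ^+ 2.
Definition wnorm (f : I -> R) := \sum_(v in W) d v * f v ^+ 2.
Definition restrict (f : I -> R) (i : I) := if i \in W then f i else 0.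

Lemma dirichlet_ge0 f : 0 <= dirichlet f.
Proof. by do 2!(apply: sumr_ge0 => ? _); rewrite mulr_ge0 ?sqr_ge0. Qed.

Lemma wnorm_term_ge0 f v : v \in W -> 0 <= d v * f v ^+ 2.
Proof. by move=> vW; rewrite mulr_ge0 ?sqr_ge0 // ltW ?d_gt0. Qed.

Lemma wnorm_ge0 f : 0 <= wnorm f.
Proof. exact: sumr_ge0 (wnorm_term_ge0 f). Qed.

Lemma wnorm_term_le f v : v \in W -> d v * f v ^+ 2 <= wnorm f.
Proof.
move=> vW; rewrite /wnorm (bigD1 v) //= lerDl.
by apply: sumr_ge0 => u /andP[uW _]; exact: wnorm_term_ge0.
Qed.

Lemma wnorm_eq0 f v : wnorm f = 0 -> v \in W -> f v = 0.
Proof.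
move=> f0 vW; move/eqP: (psumr_eq0P (wnorm_term_ge0 f) f0 vW).
by rewrite mulf_eq0 gt_eqF ?d_gt0 //= sqrf_eq0 => /eqP.
Qed.

Lemma dirichletZ c f : dirichlet (fun i => c * f i) = c ^+ 2 * dirichlet f.
Proof.
rewrite /dirichlet mulr_sumr; apply: eq_bigr => u _; rewrite mulr_sumr.
by apply: eq_bigr => w _; ring.
Qed.

Lemma wnormZ c f : wnorm (fun i => c * f i) = c ^+ 2 * wnorm f.
Proof. by rewrite /wnorm mulr_sumr; apply: eq_bigr => u _; ring. Qed.

Lemma dirichlet_restrict f : dirichlet (restrict f) = dirichlet f.
Proof.
apply: eq_bigr => u _; apply: eq_bigr => w _.
have [->|auw] := eqVneq (a u w) 0; first by rewrite !mul0r.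
have wW : w \in W by apply: (@a_supp w u); rewrite a_sym.
by rewrite /restrict (a_supp auw) wW.
Qed.

Lemma wnorm_restrict f : wnorm (restrict f) = wnorm f.
Proof. by apply: eq_bigr => v vW; rewrite /restrict vW. Qed.

Lemma exists_wnorm1 v0 : v0 \in W -> exists f, wnorm f = 1.
Proof.
move=> v0W; have dv0 := d_gt0 v0W.
exists (fun i => (i == v0)%:R * (Num.sqrt (d v0))^-1).
rewrite /wnorm (bigD1 v0) //= big1 => [|i /andP[_ /negbTE ->]]; last first.
  by rewrite mul0r expr0n mulr0.
by rewrite addr0 eqxx mul1r exprVn sqr_sqrtr ?ltW // mulfV ?gt_eqF.
Qed.

Lemma dirichlet_max_exists : (0 < #|W|)%N ->
  exists2 f0, wnorm f0 = 1 & forall f, wnorm f = 1 -> dirichlet f <= dirichlet f0.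
Proof.
case/card_gt0P => v0 v0W.
pose F (x : 'rV[R]_#|W|) i := if i \in W then x ord0 (enum_rank_in v0W i) else 0.
pose row (f : I -> R) : 'rV[R]_#|W| := \row_j f (enum_val j).
have F_row f : F (row f) = restrict f.
  apply: funext => i; rewrite /F /restrict.
  by case: ifP => // iW; rewrite mxE enum_rankK_in.
have F_enum x j : F x (enum_val j) = x ord0 j by rewrite /F enum_valP enum_valK_in.
have cF i : continuous (F ^~ i).
  by rewrite /F; case: (i \in W); [exact: coord_continuous | exact: cst_continuous].
have cD : continuous (fun x => dirichlet (F x)).
  rewrite /dirichlet; do 2!apply: continuous_sum => ?.
  apply: continuous_mulr; first exact: cst_continuous.
  by apply: continuous_sqr => x; exact: continuousB (cF _ x) (cF _ x).
have cN : continuous (fun x => wnorm (F x)).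
  apply: continuous_sum => v.
  by apply: continuous_mulr; [exact: cst_continuous | exact: continuous_sqr].
pose S := ((fun x => wnorm (F x)) @^-1` [set y : R | y = 1])%classic.
pose b (j : 'I_#|W|) := 1 + (d (enum_val j))^-1.
have compS : compact S.
  apply: (subclosed_compact _ (@rV_compact _ _ (fun j => `[- b j, b j]%classic)
    (fun j => @segment_compact R _ _))).
    by apply: preimage_closed; [move=> x _; exact: cN | exact: closed_eq].
  move=> x Sx j /=; rewrite in_itv /= -ler_norml -F_enum.
  have iW : enum_val j \in W := enum_valP j.
  set y := F x _; have di := d_gt0 iW.
  have y2 : y ^+ 2 <= (d (enum_val j))^-1.
    by rewrite -[leRHS]mulr1 ler_pdivlMl // -Sx; exact: wnorm_term_le.
  have : `|y| <= 1 + y ^+ 2.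
    by rewrite -real_normK ?num_real //; have := normr_ge0 y; nra.
  by rewrite /b; lra.
have [e e1] := exists_wnorm1 v0W.
have rowS f : wnorm f = 1 -> S (row f) by rewrite /S /= F_row wnorm_restrict.
have [c Sc c_max] :=
  EVT_max_rV (ex_intro _ _ (rowS e e1)) compS (continuous_subspaceT cD).
exists (F c); first exact: set_mem Sc.
move=> f f1; have := c_max (row f) (mem_set (rowS f f1)).
by rewrite F_row dirichlet_restrict.
Qed.

Lemma dirichlet_le_max f0 : wnorm f0 = 1 ->
    (forall f, wnorm f = 1 -> dirichlet f <= dirichlet f0) ->
  forall f, dirichlet f <= dirichlet f0 * wnorm f.
Proof.
move=> f0_1 f0_max f; have [f_0|f_gt0] := eqVneq (wnorm f) 0.
  have -> : dirichlet f = dirichlet (fun i => 0 * f i).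
    rewrite -dirichlet_restrict; congr dirichlet; apply/funext => i.
    by rewrite mul0r /restrict; case: ifP => // iW; exact: wnorm_eq0 f_0 iW.
  by rewrite dirichletZ f_0 expr0n /= !mul0r mulr0.
have f_ge0 := wnorm_ge0 f; pose k := Num.sqrt (wnorm f).
have k2 : k ^+ 2 = wnorm f by rewrite sqr_sqrtr.
have k_gt0 : 0 < wnorm f by rewrite lt_neqAle eq_sym f_gt0.
have := f0_max (fun i => k^-1 * f i).
rewrite wnormZ dirichletZ exprVn k2 mulVf // => /(_ erefl).
by rewrite ler_pdivrMl // mulrC.
Qed.

Lemma sum_delta (X : I -> R) v : \sum_u (u == v)%:R * X u = X v.
Proof.
rewrite (bigD1 v) //= eqxx mul1r big1 ?addr0 // => u /negbTE ->.
by rewrite mul0r.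
Qed.

Lemma dirichlet_delta_cross f v :
  \sum_u \sum_w a u w * ((f u - f w) * ((u == v)%:R - (w == v)%:R)) =
  2 * \sum_w a v w * (f v - f w).
Proof.
transitivity (\sum_u (u == v)%:R * (\sum_w a u w * (f u - f w)) -
              \sum_u \sum_w (w == v)%:R * (a u w * (f u - f w))).
  rewrite -sumrB; apply: eq_bigr => u _; rewrite mulr_sumr -sumrB.
  by apply: eq_bigr => w _; ring.
rewrite exchange_big /=; under [X in _ - X]eq_bigr do rewrite -mulr_sumr.
rewrite !sum_delta.
have -> : \sum_u a u v * (f u - f v) = - \sum_w a v w * (f v - f w).
  by rewrite -sumrN; apply: eq_bigr => u _; rewrite a_sym; ring.
by ring.
Qed.

Lemma dirichlet_delta_expand f v t :
  dirichlet (fun i => f i + t * (i == v)%:R) =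
  dirichlet f + t * (4 * \sum_w a v w * (f v - f w)) +
  t ^+ 2 * dirichlet (fun i => (i == v)%:R).
Proof.
have -> : 4 * \sum_w a v w * (f v - f w) =
  2 * \sum_u \sum_w a u w * ((f u - f w) * ((u == v)%:R - (w == v)%:R)).
  by rewrite dirichlet_delta_cross; ring.
rewrite /dirichlet !mulr_sumr -!big_split /=; apply: eq_bigr => u _.
by rewrite !mulr_sumr -!big_split /=; apply: eq_bigr => w _; ring.
Qed.

Lemma wnorm_delta_expand f v t : v \in W ->
  wnorm (fun i => f i + t * (i == v)%:R) =
  wnorm f + t * (2 * d v * f v) + t ^+ 2 * d v.
Proof.
move=> vW; rewrite /wnorm (bigD1 v) //= [in RHS](bigD1 v) //= eqxx mulr1.
rewrite (eq_bigr (fun i => d i * f i ^+ 2)) => [|i /andP[_ /negbTE ->]].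
  by ring.
by rewrite mulr0 addr0.
Qed.

Lemma dirichlet_max_eigen M f0 v :
    (forall f, dirichlet f <= M * wnorm f) -> dirichlet f0 = M * wnorm f0 ->
    v \in W ->
  \sum_w a v w * (f0 v - f0 w) = M / 2 * d v * f0 v.
Proof.
move=> le_M eq_M vW; set S := \sum_w _.
suff h : 4 * S - 2 * M * d v * f0 v = 0.
  have -> : S = (4 * S - 2 * M * d v * f0 v) / 4 + M / 2 * d v * f0 v by field.
  by rewrite h mul0r add0r.
apply: (@linear_coef_eq0 _ _ (dirichlet (fun i => (i == v)%:R) - M * d v)) => t.
have := le_M (fun i => f0 i + t * (i == v)%:R).
rewrite dirichlet_delta_expand wnorm_delta_expand // eq_M -/S -subr_le0.
by congr (_ <= 0); ring.
Qed.

Lemma rayleigh_eigenvector : (0 < #|W|)%N ->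
  exists f0 mu, [/\ exists2 v, v \in W & f0 v != 0,
    forall v, v \in W -> \sum_w a v w * (f0 v - f0 w) = mu * d v * f0 v,
    0 <= mu & forall f, dirichlet f <= 2 * mu * wnorm f].
Proof.
move=> W_gt0; have [f0 f0_1 f0_max] := dirichlet_max_exists W_gt0.
have le_M := dirichlet_le_max f0_1 f0_max.
have two_mu : 2 * (dirichlet f0 / 2) = dirichlet f0 by field.
exists f0, (dirichlet f0 / 2); split.
- case: (pickP [pred v | (v \in W) && (f0 v != 0)]) => [v /andP[]|f0_0].
    by exists v.
  move: f0_1; rewrite /wnorm big1 => [/eqP|v vW]; first by rewrite eq_sym oner_eq0.
  by move: (f0_0 v); rewrite /= vW => /negbFE/eqP ->; rewrite expr0n mulr0.
- by move=> v vW; apply: dirichlet_max_eigen => //; rewrite f0_1 mulr1.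
- by rewrite divr_ge0 ?dirichlet_ge0.
- by move=> f; rewrite two_mu.
Qed.

End Rayleigh.
End Rayleigh.

Lemma leq_card_imset_factor (T T1 T2 : finType) (f1 : T -> T1) (f2 : T -> T2) :
    (forall u w, f1 u = f1 w -> f2 u = f2 w) ->
  (#|[set f2 x | x : T]| <= #|[set f1 x | x : T]|)%N.
Proof.
move=> f12; pose k c := omap f2 [pick v | f1 v == c].
have k_f1 u : k (f1 u) = Some (f2 u).
  rewrite /k; case: pickP => [v /eqP /f12 /= -> //|/(_ u)].
  by rewrite eqxx.
have -> : #|[set f2 x | x : T]| = #|[set Some (f2 x) | x : T]|.
  by rewrite (imset_comp Some f2) card_imset //; exact: Some_inj.
rewrite (eq_imset _ (fun u => esym (k_f1 u))) (imset_comp k f1).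
exact: leq_imset_card.
Qed.

Section Graph.
Variable V : finType.
Implicit Types (A B : {set {set V}}) (e : {set V}) (s : V -> bool) (u v w x y : V).

Definition simple_edges B := forall e, e \in B -> #|e| = 2%N.

Lemma simple_edgesS A B : A \subset B -> simple_edges B -> simple_edges A.
Proof. by move=> /subsetP AB HB e /AB /HB. Qed.

Lemma simple_edgeP B e : simple_edges B -> e \in B ->
  exists x y, x != y /\ e = [set x; y].
Proof. by move=> HB /HB /eqP /cards2P [x [y [xy ->]]]; exists x, y. Qed.

Lemma eadj_sym B : symmetric (eadj B).
Proof. by move=> x y; rewrite /eadj setUC. Qed.

Lemma connect_eadj_sym B : connect_sym (eadj B).
Proof. exact/sym_connect_sym/eadj_sym. Qed.

Lemma eadj_vsupp B u w : eadj B u w -> u \in vsupp B.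
Proof.
by move=> uw; rewrite inE; apply/existsP; exists [set u; w]; rewrite set21 andbT.
Qed.

Lemma connect_in_edge B e u w : simple_edges B -> e \in B -> u \in e -> w \in e ->
  connect (eadj B) u w.
Proof.
move=> HB eB; have [x [y [_ exy]]] := simple_edgeP HB eB.
have xy : eadj B x y by rewrite /eadj -exy.
rewrite exy !inE => /orP[]/eqP -> /orP[]/eqP ->;
  by rewrite ?connect0 ?connect1 // eadj_sym.
Qed.

Lemma gdegE B v : simple_edges B -> gdeg B v = #|[set w | eadj B v w]|.
Proof.
move=> HB; rewrite /gdeg.
have -> : [set e in B | v \in e] = (fun w => [set v; w]) @: [set w | eadj B v w].
  apply/setP => e; apply/idP/imsetP.
    rewrite inE => /andP[eB ve]; have [x [y [_ exy]]] := simple_edgeP HB eB.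
    move: eB ve; rewrite exy !inE => eB /orP[]/eqP vxy; subst v.
      by exists y; rewrite ?inE.
    by exists x; rewrite ?inE /eadj setUC.
  by move=> [w]; rewrite inE /eadj => vw ->; rewrite inE vw set21.
rewrite card_in_imset // => w1 w2; rewrite !inE => vw1 _ e12.
have : w1 \in [set v; w2] by rewrite -e12 set22.
rewrite !inE => /orP[]/eqP // w1v; move: (HB _ vw1).
by rewrite w1v setUid cards1.
Qed.

Lemma gdeg_gt0 B v : v \in vsupp B -> (0 < gdeg B v)%N.
Proof.
rewrite inE => /existsP [e /andP[eB ve]]; apply/card_gt0P; exists e.
by rewrite inE eB.
Qed.

Lemma sum_gdeg B : simple_edges B -> (\sum_v gdeg B v = 2 * #|B|)%N.
Proof.
move=> HB.
have -> : (\sum_v gdeg B v = \sum_v \sum_(e in B) (v \in e))%N.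
  apply: eq_bigr => v _; rewrite /gdeg -sum1_card big_mkcond [RHS]big_mkcond /=.
  by apply: eq_bigr => e _; rewrite inE; case: (e \in B); case: (v \in e).
rewrite exchange_big /= -sum1_card big_distrr /=.
apply: eq_big => // e eB; rewrite muln1 -(HB e eB) -sum1_card big_mkcond /=.
by rewrite [RHS]big_mkcond; apply: eq_bigr => v _; case: (v \in e).
Qed.

Definition comp A x := [set y | connect (eadj A) x y].

Lemma ncompE A : ncomp A = #|[set comp A x | x : V]|.
Proof. by []. Qed.

Lemma comp_eq A u w : (comp A u == comp A w) = connect (eadj A) u w.
Proof.
apply/eqP/idP => [uw|uw]; last first.
  by apply/setP => z; rewrite !inE (same_connect (connect_eadj_sym A) uw).
have : w \in comp A w by rewrite inE connect0.
by rewrite -uw inE.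
Qed.

Lemma ncomp0 : ncomp (set0 : {set {set V}}) = #|V|.
Proof.
rewrite ncompE card_imset // => u w /eqP; rewrite comp_eq.
by case/connectP => -[_ ->|z p] //=; rewrite /eadj inE.
Qed.

Lemma ncomp_le A : (ncomp A <= #|V|)%N.
Proof. exact: leq_imset_card. Qed.

Lemma grank_gt0 A : simple_edges A -> A != set0 -> (0 < grank A)%N.
Proof.
move=> HA /set0Pn [e eA]; have [x [y [xy exy]]] := simple_edgeP HA eA.
have cxy : connect (eadj A) x y by apply: connect1; rewrite /eadj -exy.
have : (ncomp A <= #|[set~ y]|)%N.
  rewrite ncompE; apply: leq_trans (leq_imset_card (comp A) _).
  apply/subset_leq_card/subsetP => c /imsetP [v _ ->]; apply/imsetP.
  have [->|vy] := eqVneq v y; last by exists v; rewrite ?inE.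
  by exists x; [rewrite !inE | apply/eqP; rewrite comp_eq connect_eadj_sym].
have : (0 < #|V|)%N by apply/card_gt0P; exists x.
by rewrite cardsC1 /grank; lia.
Qed.

Lemma ncomp_le_add_edge A A' x y : A \subset [set x; y] |: A' ->
  (ncomp A' <= ncomp A + ~~ connect (eadj A') x y)%N.
Proof.
move=> /subsetP AxyA'; have csym := connect_eadj_sym A'.
pose g v := if connect (eadj A') y v then x else v.
have g_xy v : v \in [set x; y] -> g v = x.
  by rewrite !inE /g => /orP[]/eqP ->; [case: ifP | rewrite connect0].
have g_edge u w : eadj A u w -> connect (eadj A') (g u) (g w).
  move=> /AxyA'; rewrite !inE => /orP[/eqP uw|uwA'].
    by rewrite !g_xy ?connect0 // -uw ?set21 ?set22.
  have cuw : connect (eadj A') u w := connect1 uwA'.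
  rewrite /g (same_connect_r csym cuw y).
  by case: ifP => _; [exact: connect0 | exact: cuw].
have g_connect u w : connect (eadj A) u w -> connect (eadj A') (g u) (g w).
  case/connectP => p + ->; elim: p u => [|z p IH] u /=; first by rewrite connect0.
  by case/andP => /g_edge uz /IH; apply: connect_trans uz.
have le_img : (#|[set comp A' (g v) | v : V]| <= ncomp A)%N.
  rewrite ncompE; apply: leq_card_imset_factor => u w /eqP.
  by rewrite comp_eq => /g_connect; rewrite -comp_eq => /eqP.
rewrite ncompE; have [cxy|ncxy] /= := boolP (connect (eadj A') x y).
  rewrite addn0; apply/(leq_trans _ le_img)/subset_leq_card/subsetP.
  move=> c /imsetP [v _ ->]; apply/imsetP; exists v => //.
  rewrite /g; case: ifP => // yv; apply/eqP.
  by rewrite comp_eq csym (connect_trans cxy yv).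
apply: (@leq_trans #|comp A' y |: [set comp A' (g v) | v : V]|).
  apply/subset_leq_card/subsetP => c /imsetP [v _ ->]; rewrite !inE.
  case yv : (connect (eadj A') y v); first by rewrite comp_eq csym yv.
  by apply/orP; right; apply/imsetP; exists v; rewrite /g ?yv.
by rewrite cardsU1 addnC leq_add ?leq_b1.
Qed.

Definition bichrom s e := [exists u in e, exists w in e, s u != s w].
Definition ncut s A := #|[set e in A | bichrom s e]|.

Lemma bichrom_addb s (t : V -> bool) e : {in e &, forall u w, t u = t w} ->
  bichrom (fun v => s v (+) t v) e = bichrom s e.
Proof.
move=> te; apply/existsP/existsP => -[u /andP[ue /existsP[w /andP[we suw]]]];
  exists u; rewrite ue /=; apply/existsP; exists w; rewrite we /=;
  by move: suw; rewrite (te u w ue we); case: (s u); case: (s w); case: (t w).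
Qed.

Lemma bichrom_set2 s u w : bichrom s [set u; w] = (s u != s w).
Proof.
apply/existsP/idP => [[p /andP[pin /existsP[q /andP[qin spq]]]]|suw].
  by move: pin qin spq; rewrite !inE => /orP[]/eqP -> /orP[]/eqP ->;
    rewrite ?eqxx // eq_sym.
by exists u; rewrite set21 /=; apply/existsP; exists w; rewrite set22.
Qed.

Lemma ncutS s A B : A \subset B -> (ncut s A <= ncut s B)%N.
Proof.
move=> /subsetP AB; apply/subset_leq_card/subsetP => e.
by rewrite !inE => /andP[/AB -> ->].
Qed.

Lemma eq_ncut s s' A : {in A, bichrom s =1 bichrom s'} -> ncut s A = ncut s' A.
Proof.
by move=> ss'; apply: eq_card => f; rewrite !inE; apply: andb_id2l; exact: ss'.
Qed.

Lemma ncut_setD1 s A e : e \in A -> bichrom s e -> ncut s A = (ncut s (A :\ e)).+1.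
Proof.
move=> eA se; rewrite /ncut (cardsD1 e) inE eA se add1n; congr _.+1.
by apply: eq_card => f; rewrite !inE andbA.
Qed.

(* Induction on A: remove an edge xy; if x and y stay connected the rank does
   not drop, otherwise flipping the colours on the component of y makes xy
   bichromatic without affecting the other edges. *)
Lemma exists_ncut_ge_grank A : simple_edges A -> exists s, (grank A <= ncut s A)%N.
Proof.
have [k] := ubnP #|A|; elim: k A => // k IH A ltA HA.
have [->|[e eA]] := set_0Vmem A.
  by exists xpredT; rewrite /grank ncomp0 subnn.
have [x [y [_ exy]]] := simple_edgeP HA eA.
set A' := A :\ e; have A'A : A' \subset A := subD1set A e.
have HA' := simple_edgesS A'A HA.
have [|s' cut_s'] := IH A' _ HA'.
  by move: ltA; rewrite (cardsD1 e A) eA -/A'; lia.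
have sub : A \subset [set x; y] |: A' by rewrite -exy setD1K.
have le_ncomp := ncomp_le_add_edge sub.
have := ncomp_le A; have := ncomp_le A'; rewrite /grank in cut_s' *.
have [cxy|ncxy] := boolP (connect (eadj A') x y); rewrite ?cxy ?ncxy /= in le_ncomp.
  by exists s'; have := ncutS s' A'A; lia.
pose t v := (s' x == s' y) && connect (eadj A') y v.
exists (fun v => s' v (+) t v).
have bi_e : bichrom (fun v => s' v (+) t v) e.
  have nyx : connect (eadj A') y x = false.
    by rewrite connect_eadj_sym; exact/negbTE.
  apply/existsP; exists x; rewrite exy set21 /=; apply/existsP; exists y.
  rewrite set22 /= /t nyx connect0 andbF andbT addbF.
  by case: (s' x); case: (s' y).
have -> : ncut (fun v => s' v (+) t v) A = (ncut s' A').+1.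
  rewrite (ncut_setD1 eA bi_e); congr _.+1; apply: eq_ncut => f fA'.
  apply: bichrom_addb => u w uf wf.
  have cuw := connect_in_edge HA' fA' uf wf.
  by rewrite /t (same_connect_r (connect_eadj_sym A') cuw).
lia.
Qed.

End Graph.

Import Rayleigh.

Section Laplacian.
Variables (R : realType) (V : finType).
Implicit Types (A B C : {set {set V}}) (s : V -> bool) (f : V -> R) (u v w : V).

Definition adjw B u w : R := (eadj B u w)%:R.
Definition degw B v : R := (gdeg B v)%:R.

Lemma sum_adjw B v : simple_edges B -> \sum_w adjw B v w = degw B v.
Proof.
move=> HB; rewrite /degw gdegE // -sum1_card natr_sum [RHS]big_mkcond /=.
by apply: eq_bigr => w _; rewrite inE /adjw; case: (eadj B v w).
Qed.

Lemma lap_eig_of_dirichlet_eigen B f mu : simple_edges B ->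
    (exists2 v, v \in vsupp B & f v != 0) ->
    (forall v, v \in vsupp B ->
       \sum_w adjw B v w * (f v - f w) = mu * degw B v * f v) ->
  lap_eig (vsupp B) B mu.
Proof.
move=> HB nz eig; exists f; split => // v vB.
have d_ne0 : degw B v != 0 by rewrite pnatr_eq0 -lt0n gdeg_gt0.
have : \sum_w adjw B v w * (f v - f w) = degw B v * f v - \sum_(w | eadj B w v) f w.
  rewrite -(sum_adjw v HB) mulr_suml [X in _ = _ - X]big_mkcond -sumrB /=.
  apply: eq_bigr => w _; rewrite /adjw [eadj B w v]eadj_sym.
  by case: (eadj B v w); rewrite ?mul1r ?mul0r ?subr0.
rewrite eig // => sum_eq.
have -> : \sum_(w | eadj B w v) f w = degw B v * f v - mu * degw B v * f v.
  by rewrite sum_eq; ring.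
by rewrite -/(degw B v); field.
Qed.

Lemma rayleigh_le_lap_max B (lam : R) : simple_edges B -> B != set0 ->
    lap_max (vsupp B) B lam ->
  0 <= lam /\
  forall f, dirichlet (adjw B) f <= 2 * lam * wnorm (degw B) (vsupp B) f.
Proof.
move=> HB /set0Pn[e eB] [_ lam_max].
have a_sym u w : adjw B u w = adjw B w u by rewrite /adjw eadj_sym.
have a_supp u w : adjw B u w != 0 -> u \in vsupp B.
  by rewrite pnatr_eq0 eqb0 negbK; exact: eadj_vsupp.
have d_gt0 v : v \in vsupp B -> 0 < degw B v by move=> /gdeg_gt0; rewrite ltr0n.
have vsupp_gt0 : (0 < #|vsupp B|)%N.
  have [x [y [_ exy]]] := simple_edgeP HB eB.
  apply/card_gt0P; exists x; rewrite inE; apply/existsP; exists e.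
  by rewrite eB exy set21.
have [f0 [mu [nz eig mu_ge0 bound]]] :=
  rayleigh_eigenvector a_sym (fun _ _ => ler0n _ _) a_supp d_gt0 vsupp_gt0.
have mu_le := lam_max mu (lap_eig_of_dirichlet_eigen HB nz eig).
split=> [|f]; first exact: le_trans mu_le.
apply: le_trans (bound f) _; apply: ler_wpM2r; first exact: wnorm_ge0.
by rewrite ler_wpM2l.
Qed.

Definition sign_vec s A v : R :=
  if v \in vsupp A then (if s v then 1 else -1) else 0.

Lemma ncut_le_dirichlet_sign s A B : simple_edges B -> A \subset B ->
  8 * (ncut s A)%:R <= dirichlet (adjw B) (sign_vec s A).
Proof.
move=> HB AB; pose A2 := [set e in A | bichrom s e].
have A2A : A2 \subset A by apply/subsetP => e; rewrite inE => /andP[].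
have HA2 := simple_edgesS (subset_trans A2A AB) HB.
have -> : 8 * (ncut s A)%:R = \sum_u \sum_w adjw A2 u w * 4.
  under eq_bigr do rewrite -mulr_suml sum_adjw //.
  by rewrite -mulr_suml /degw -natr_sum sum_gdeg // natrM; ring.
apply: ler_sum => u _; apply: ler_sum => w _; rewrite /adjw.
case uw2 : (eadj A2 u w); last by rewrite mul0r mulr_ge0 ?ler0n ?sqr_ge0.
move: uw2; rewrite /eadj inE bichrom_set2 => /andP[uwA suw].
have uA : u \in vsupp A by apply: (@eadj_vsupp _ _ u w).
have wA : w \in vsupp A by apply: (@eadj_vsupp _ _ w u); rewrite eadj_sym.
rewrite (subsetP AB _ uwA) /sign_vec uA wA.
by move: suw; case: (s u); case: (s w) => // _; rewrite expr2; lra.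
Qed.

Lemma wnorm_sign_vec_le s A B C :
    {in vsupp A, forall v, gdeg B v <= gdeg C v}%N ->
  wnorm (degw B) (vsupp B) (sign_vec s A) <= (\sum_v gdeg C v)%:R.
Proof.
move=> deg_le; rewrite natr_sum.
apply: (@le_trans _ _ (\sum_v degw B v * sign_vec s A v ^+ 2)).
  rewrite [leRHS](bigID (mem (vsupp B))) /= lerDl.
  by apply: sumr_ge0 => v _; rewrite mulr_ge0 ?ler0n ?sqr_ge0.
apply: ler_sum => v _; rewrite /sign_vec; case: ifP => vA; last first.
  by rewrite expr0n mulr0 ler0n.
have -> : (if s v then 1 else -1) ^+ 2 = 1 :> R.
  by case: (s v); rewrite ?sqrrN expr1n.
by rewrite mulr1 ler_nat deg_le.
Qed.

Lemma lap_max_grank_bound B A (lam : R) :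
    simple_edges B -> A \subset B -> A != set0 -> lap_max (vsupp B) B lam ->
  2 * (grank A)%:R <= lam * (#|A| + #|bdry B A|)%:R.
Proof.
move=> HB AB A0.
have B0 : B != set0 by apply: contraNneq A0 => B0; rewrite -subset0 -B0.
move=> /(rayleigh_le_lap_max HB B0) [lam_ge0 bound].
have [s cut_s] := exists_ncut_ge_grank (simple_edgesS AB HB).
pose C := A :|: bdry B A.
have CB : C \subset B.
  by apply/subsetP => e; rewrite !inE => /orP[/(subsetP AB)|/andP[/andP[_ ->]]].
have deg_le : {in vsupp A, forall v, gdeg B v <= gdeg C v}%N.
  move=> v vA; apply/subset_leq_card/subsetP => e; rewrite !inE => /andP[eB ve].
  rewrite eB ve andbT; case: (e \in A) => //=.
  by apply/existsP; exists v; rewrite ve.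
have norm_le : wnorm (degw B) (vsupp B) (sign_vec s A) <=
               (2 * (#|A| + #|bdry B A|))%:R.
  apply: le_trans (wnorm_sign_vec_le s deg_le) _.
  rewrite sum_gdeg ?ler_nat ?leq_mul2l ?cardsU ?leq_subr ?orbT //.
  exact: simple_edgesS CB HB.
have := le_trans (ncut_le_dirichlet_sign s HB AB) (bound (sign_vec s A)).
have := ler_wpM2l lam_ge0 norm_le; rewrite natrM.
have : ((grank A)%:R : R) <= (ncut s A)%:R by rewrite ler_nat.
nra.
Qed.

Lemma two_div_rho_le A (n : nat) (lam : R) : (0 < #|A|)%N -> (0 < n)%N ->
  2 * (grank A)%:R <= lam * n%:R -> 2 / rho R A * (#|A|%:R / n%:R) <= lam.
Proof.
move=> A_gt0 n_gt0 le_lam; rewrite /rho invf_div.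
have -> : 2 * ((grank A)%:R / #|A|%:R) * (#|A|%:R / n%:R) =
          2 * (grank A)%:R / n%:R :> R.
  by field; rewrite !pnatr_eq0 -!lt0n n_gt0.
by rewrite ler_pdivrMr ?ltr0n.
Qed.

End Laplacian.

Theorem theorem3p16 (R : realType) (V : finType) (E : {set {set V}})
  (Hsimple : forall e, e \in E -> #|e| = 2%N)
  (Hedge : E != set0)
  (Hnoiso : forall v : V, exists2 e, e \in E & v \in e) :
  (forall lam : R, lap_max [set: V] E lam -> 2 / rho R E <= lam) /\
  (forall (A : {set {set V}}) (lam : R), A \subset E -> A != set0 ->
     lap_max [set: V] E lam ->
     2 / rho R A * (#|A|%:R / (#|A| + #|bdry E A|)%:R) <= lam) /\
  (uniformly_dense R E ->
   forall (A : {set {set V}}) (lam : R), A \subset E -> A != set0 ->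
     lap_max (vsupp A) A lam -> 2 / rho R E <= lam).
Proof.
have vsuppE : vsupp E = [set: V].
  apply/setP => v; rewrite !inE; have [e eE ve] := Hnoiso v.
  by apply/existsP; exists e; rewrite eE.
have bdry_id (B : {set {set V}}) : bdry B B = set0.
  by apply/setP => e; rewrite !inE andNb.
have bdry_bound (A : {set {set V}}) (lam : R) :
    A \subset E -> A != set0 -> lap_max [set: V] E lam ->
    2 / rho R A * (#|A|%:R / (#|A| + #|bdry E A|)%:R) <= lam.
  move=> AE A0; rewrite -vsuppE => /(lap_max_grank_bound Hsimple AE A0).
  by apply: two_div_rho_le; rewrite ?addn_gt0 card_gt0 A0.
split; [|split=> //].
  move=> lam /(bdry_bound E lam (subxx E) Hedge).
  by rewrite bdry_id cards0 addn0 divff ?mulr1 // pnatr_eq0 -lt0n card_gt0.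
move=> ud A lam AE A0 HA; have HA2 := simple_edgesS AE Hsimple.
have A_gt0 : (0 < #|A|)%N by rewrite card_gt0.
have := lap_max_grank_bound HA2 (subxx A) A0 HA; rewrite bdry_id cards0 addn0.
move=> /(two_div_rho_le A_gt0 A_gt0); rewrite divff ?mulr1 ?pnatr_eq0 -?lt0n //.
apply: le_trans; have rhoA_gt0 : 0 < rho R A by rewrite divr_gt0 ?ltr0n ?grank_gt0.
rewrite ler_wpM2l // lef_pV2 ?posrE ?ud //; exact: lt_le_trans (ud A AE A0).
Qed.
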